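(* There are $2^{\aleph_0}$ Epstein incomplete logics. More precisely, with $p,q$ distinct propositional letters, $p^0:=q\looparrowright p$, $p^{n+1}:=p\to p^n$ and $\Lambda_S:=\{q\looparrowright p^m:m\in S\}$: for every non-empty $S\subseteq\omega\setminus\{0\}$ the logic $\mathcal{F}\Lambda_S$ is Epstein incomplete, and the logics $\mathcal{F}\Lambda_S$ for distinct such $S$ are pairwise distinct.
   Context: Language: propositional letters $\Phi=\{p_0,p_1,\dots\}$; connectives $\neg$, $\lor,\wedge,\to,\leftrightarrow,\vartriangle,\looparrowright$; $\mathsf{FOR}$ the set of all formulas. An Epstein model is $\langle v,\mathfrak{R}\rangle$ with $v:\Phi\to\{0,1\}$ and $\mathfrak{R}\subseteq\mathsf{FOR}^2$ (an Epstein relation); truth: letters via $v$, boolean connectives classical, $\langle v,\mathfrak{R}\rangle\vDash\varphi\vartriangle\psi$ iff both true and $\langle\varphi,\psi\rangle\in\mathfrak{R}$; $\langle v,\mathfrak{R}\rangle\vDash\varphi\looparrowright\psi$ iff $\varphi\to\psi$ true and $\langle\varphi,\psi\rangle\in\mathfrak{R}$. $\mathfrak{R}\vDash\varphi$ iff true under every valuation. $\mathcal{F}$ is the least set containing all classical tautologies of the language and the axioms $(p\looparrowright q)\to(p\to q)$, $(p\vartriangle q)\leftrightarrow((p\looparrowright q)\wedge(p\wedge q))$, closed under uniform substitution and modus ponens; $\mathcal{F}\Lambda$ is the least set containing $\mathcal{F}\cup\Lambda$ closed under uniform substitution and modus ponens. A logic is a set of formulas containing $\mathcal{F}$ closed under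 uniform substitution and modus ponens. A logic $\lambda$ is Epstein complete iff there is a set $X$ of Epstein relations with $\lambda=\{\varphi:\mathfrak{R}\vDash\varphi\text{ for all }\mathfrak{R}\in X\}$; otherwise it is Epstein incomplete. *)

From Stdlib Require Import Arith.

Inductive form : Type :=
| Var : nat -> form
| Neg : form -> form
| Or  : form -> form -> form
| And : form -> form -> form
| Imp : form -> form -> form
| Iff : form -> form -> form
| Tri : form -> form -> form
| Loop : form -> form -> form.

Fixpoint beval (w : form -> bool) (f : form) : bool :=
  match f with
  | Var n => w (Var n)
  | Neg a => negb (beval w a)
  | Or a b => beval w a || beval w b
  | And a b => beval w a && beval w b
  | Imp a b => implb (beval w a) (beval w b)
  | Iff a b => Bool.eqb (beval w a) (beval w b)
  | Tri a b => w (Tri a b)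
  | Loop a b => w (Loop a b)
  end.

Definition tautology (f : form) : Prop := forall w : form -> bool, beval w f = true.

Fixpoint subst (s : nat -> form) (f : form) : form :=
  match f with
  | Var n => s n
  | Neg a => Neg (subst s a)
  | Or a b => Or (subst s a) (subst s b)
  | And a b => And (subst s a) (subst s b)
  | Imp a b => Imp (subst s a) (subst s b)
  | Iff a b => Iff (subst s a) (subst s b)
  | Tri a b => Tri (subst s a) (subst s b)
  | Loop a b => Loop (subst s a) (subst s b)
  end.

Definition p : form := Var 0.
Definition q : form := Var 1.

Definition ax1 : form := Imp (Loop p q) (Imp p q).
Definition ax2 : form := Iff (Tri p q) (And (Loop p q) (And p q)).

Inductive FL (Lam : form -> Prop) : form -> Prop :=
| FL_taut : forall f, tautology f -> FL Lam f
| FL_ax1 : FL Lam ax1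
| FL_ax2 : FL Lam ax2
| FL_lam : forall f, Lam f -> FL Lam f
| FL_subst : forall s f, FL Lam f -> FL Lam (subst s f)
| FL_mp : forall f g, FL Lam f -> FL Lam (Imp f g) -> FL Lam g.

Definition F : form -> Prop := FL (fun _ => False).

Definition is_logic (lam : form -> Prop) : Prop :=
  (forall f, F f -> lam f) /\
  (forall s f, lam f -> lam (subst s f)) /\
  (forall f g, lam f -> lam (Imp f g) -> lam g).

Definition erel := form -> form -> Prop.

Fixpoint sat (v : nat -> bool) (R : erel) (f : form) : Prop :=
  match f with
  | Var n => v n = true
  | Neg a => ~ sat v R a
  | Or a b => sat v R a \/ sat v R b
  | And a b => sat v R a /\ sat v R b
  | Imp a b => sat v R a -> sat v R b
  | Iff a b => sat v R a <-> sat v R b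
  | Tri a b => sat v R a /\ sat v R b /\ R a b
  | Loop a b => (sat v R a -> sat v R b) /\ R a b
  end.

Definition valid_in (R : erel) (f : form) : Prop := forall v : nat -> bool, sat v R f.

Definition epstein_complete (lam : form -> Prop) : Prop :=
  exists X : erel -> Prop, forall f, lam f <-> (forall R, X R -> valid_in R f).

Fixpoint ppow (n : nat) : form :=
  match n with
  | 0 => Loop q p
  | S m => Imp p (ppow m)
  end.

Definition LamS (S : nat -> Prop) (f : form) : Prop :=
  exists m, S m /\ f = Loop q (ppow m).

(* Any Epstein relation validating [q ~> p^m] relates [q] to [p]: at the valuation
   making every letter true, [p^m] holds, and unfolding it down to [p^0 = q ~> p]
   forces [R q p].  Hence an Epstein complete [F Lambda_S] would prove
   [(q -> p) -> (q ~> p)].  On the other hand, [F Lambda_T] (with [0] not in [T])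
   is sound for validity of all substitution instances in the relation relating
   every pair except [(bot, b)], where [bot] is a contradiction and [b] is not of
   the form [p^k[bot/q, B/p]] with [k] in [T]: an instance [a ~> p^k[a/q, B/p]]
   needs [a] true, so [a <> bot], and then every pair with left side [a] is in the
   relation.  Substituting [bot] for [q] refutes [(q -> p) -> (q ~> p)] when
   [b = p], and refutes [q ~> p^m] when [b = p^m[bot/q, p/p]] with [m] not in [T]. *)
From Stdlib Require Import Classical ClassicalDescription.

Lemma subst_subst s s' f : subst s (subst s' f) = subst (fun n => subst s (s' n)) f.
Proof.
  induction f; simpl; try rewrite IHf; try rewrite IHf1; try rewrite IHf2; reflexivity.
Qed.

Fixpoint ppow_inst (a b : form) (k : nat) : form :=
  match k with
  | 0 => Loop a b
  | S j => Imp b (ppow_inst a b j)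
  end.

Lemma subst_ppow s k : subst s (ppow k) = ppow_inst (s 1) (s 0) k.
Proof. induction k; simpl; [reflexivity | rewrite IHk; reflexivity]. Qed.

Lemma ppow_inst_inj a b b' k k' : ppow_inst a b k = ppow_inst a b' k' -> k = k'.
Proof.
  revert k'; induction k; intros [|k'] E; simpl in E; try discriminate; auto.
  injection E; intros E' _; f_equal; eauto.
Qed.

Lemma sat_tautology v R s f : tautology f -> sat v R (subst s f).
Proof.
  intro Hf.
  set (w := fun g => if excluded_middle_informative (sat v R (subst s g))
                     then true else false).
  assert (Hw : forall g, w g = true <-> sat v R (subst s g)).
  { intro g; unfold w; destruct excluded_middle_informative; intuition discriminate. }
  assert (Hb : forall g, beval w g = true <-> sat v R (subst s g)).
  { induction g; cbn [beval subst sat];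
      [ apply Hw
      | generalize IHg; destruct (beval w g)
      | generalize IHg1 IHg2; destruct (beval w g1), (beval w g2) ..
      | apply Hw | apply Hw ];
      simpl; intuition discriminate. }
  apply Hb, Hf.
Qed.

Definition inst_valid (R : erel) (f : form) : Prop :=
  forall s v, sat v R (subst s f).

Lemma FL_inst_valid (Lam : form -> Prop) (R : erel) :
  (forall f, Lam f -> inst_valid R f) -> forall f, FL Lam f -> inst_valid R f.
Proof.
  intros HLam f Hf; induction Hf; intros s' v.
  - now apply sat_tautology.
  - simpl; tauto.
  - simpl; tauto.
  - now apply HLam.
  - rewrite subst_subst; apply IHHf.
  - exact (IHHf2 s' v (IHHf1 s' v)).
Qed.

Definition bot : form := And p (Neg p).

Definition rel_except (a b : form) : erel := fun x y => ~ (x = a /\ y = b).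

Lemma LamS_inst_valid (T : nat -> Prop) (b : form) :
  ~ T 0 -> (forall B k, T k -> b <> ppow_inst bot B k) ->
  forall f, LamS T f -> inst_valid (rel_except bot b) f.
Proof.
  intros HT0 Hb f [k [Hk ->]] s v.
  simpl; rewrite subst_ppow.
  split.
  - intro Ha.
    assert (Hrel : forall c, rel_except bot b (s 1) c)
      by (intros c [E _]; rewrite E in Ha; simpl in Ha; tauto).
    assert (Hinst : forall j, sat v (rel_except bot b) (s 0) ->
                              sat v (rel_except bot b) (ppow_inst (s 1) (s 0) j))
      by (induction j; simpl; auto).
    destruct k as [|k]; [contradiction | exact (Hinst k)].
  - intros [E1 E2]; rewrite E1 in E2; exact (Hb _ _ Hk (eq_sym E2)).
Qed.

Definition q_to_bot (n : nat) : form := match n with 1 => bot | _ => Var n end.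

Lemma valid_loop_ppow_rel_qp (R : erel) m :
  valid_in R (Loop q (ppow m)) -> R q p.
Proof.
  intro Hvalid.
  destruct (Hvalid (fun _ => true)) as [Himp _].
  assert (Hunfold : forall j, sat (fun _ => true) R (ppow j) -> R q p)
    by (induction j; simpl; [tauto | intro H; apply IHj, H; reflexivity]).
  apply (Hunfold m), Himp; reflexivity.
Qed.

Lemma FL_LamS_incomplete (S : nat -> Prop) :
  (exists m, S m) -> ~ S 0 -> ~ epstein_complete (FL (LamS S)).
Proof.
  intros [m Hm] HS0 [X HX].
  set (phi := Imp (Imp q p) (Loop q p)).
  assert (Hphi : FL (LamS S) phi).
  { apply HX; intros R HR v; simpl.
    assert (Rqp : R q p).
    { apply (valid_loop_ppow_rel_qp R m).
      apply (proj1 (HX _)); [apply FL_lam; exists m; auto | exact HR]. }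
    auto. }
  assert (Hb : forall B k, S k -> p <> ppow_inst bot B k)
    by (intros B [|k] _; discriminate).
  destruct (FL_inst_valid _ _ (LamS_inst_valid S p HS0 Hb) phi Hphi q_to_bot (fun _ => true))
    as [_ Hrel]; [intros _; reflexivity |].
  apply Hrel; split; reflexivity.
Qed.

Lemma FL_LamS_not_derivable (T : nat -> Prop) m :
  ~ T m -> ~ T 0 -> ~ FL (LamS T) (Loop q (ppow m)).
Proof.
  intros HTm HT0 Hder.
  assert (Hb : forall B k, T k -> ppow_inst bot p m <> ppow_inst bot B k)
    by (intros B k Hk E; apply ppow_inst_inj in E; subst; contradiction).
  destruct (FL_inst_valid _ _ (LamS_inst_valid T _ HT0 Hb) _ Hder q_to_bot (fun _ => true)) as [_ Hrel].
  apply Hrel; split; [reflexivity | apply subst_ppow].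
Qed.

Theorem mainTheorem10 :
  (forall S : nat -> Prop, (exists m, S m) -> ~ S 0 ->
     ~ epstein_complete (FL (LamS S))) /\
  (forall S T : nat -> Prop,
     (exists m, S m) -> ~ S 0 -> (exists m, T m) -> ~ T 0 ->
     ~ (forall m, S m <-> T m) ->
     ~ (forall f, FL (LamS S) f <-> FL (LamS T) f)).
Proof.
  split; [exact FL_LamS_incomplete |].
  intros S T _ HS0 _ HT0 HST Heq.
  apply not_all_ex_not in HST; destruct HST as [m Hm].
  assert (Hder : forall U, U m -> FL (LamS U) (Loop q (ppow m)))
    by (intros U HU; apply FL_lam; exists m; auto).
  destruct (classic (S m)) as [HSm | HSm].
  - apply (FL_LamS_not_derivable T m); [tauto | exact HT0 | apply Heq, Hder, HSm].
  - apply (FL_LamS_not_derivable S m); [exact HSm | exact HS0 |].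
    apply Heq, Hder; tauto.
Qed.
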